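(* Let $\alpha$ be a parameter. (i) Let $n_1>\dots>n_p\ge0$ and $m_1>\dots>m_q\ge0$ be integers, $r=p+q$, and $P(x)=e^{-qx}\mathrm{Wr}[L^{\alpha}_{n_1}(x),\dots,L^{\alpha}_{n_p}(x),e^xL^{\alpha}_{m_1}(-x),\dots,e^xL^{\alpha}_{m_q}(-x)]$. Let $s$ be the smallest positive integer with $n_i<r-1$ for all $i\ge s$ and $n_i\ge r-1$ for all $i<s$ ($s=p+1$ if none exists), and $s'$ the analogue for the $m_j$ ($s'=q+1$ if none exists). Then, up to sign, $$P(0)=\frac{\prod_{k=1}^{r}(\alpha+k)^{(r-k)}\prod_{i=1}^{s-1}(\alpha+r)^{(n_i-r+1)}\prod_{j=1}^{s'-1}(\alpha+r)^{(m_j-r+1)}\;\Delta(-n_p,\dots,-n_1,\alpha+1+m_1,\dots,\alpha+1+m_q)}{\prod_{i=s}^{p}(\alpha+1+n_i)^{(r-1-n_i)}\prod_{j=s'}^{q}(\alpha+1+m_j)^{(r-1-m_j)}\prod_{i=1}^{p}n_i!\prod_{j=1}^{q}m_j!}.$$ (ii) Let $n_1'>\dots>n_p'\ge0$ and $m_1'>\dots>m_q'\ge0$ be integers, $r=p+q$, and $Q(x)=e^{-px}x^{\alpha r}\mathrm{Wr}[x^{-\alpha}L^{-\alpha}_{m_1'}(x),\dots,x^{-\alpha}L^{-\alpha}_{m_q'}(x),e^xx^{-\alpha}L^{-\alpha}_{n_1'}(-x),\dots,e^xx^{-\alpha}L^{-\alpha}_{n_p'}(-x)]$. Let $\mathbf{s}$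 be the smallest positive integer with $n_i'<r-1$ for $i\ge\mathbf{s}$ and $n_i'\ge r-1$ for $i<\mathbf{s}$ ($\mathbf{s}=p+1$ if none exists), and $\mathbf{s}'$ the analogue for the $m_j'$ ($\mathbf{s}'=q+1$ if none exists). Then, up to sign, $$Q(0)=\frac{\prod_{k=1}^{r}(-\alpha+k)^{(r-k)}\prod_{j=1}^{\mathbf{s}'-1}(-\alpha+r)^{(m_j'-r+1)}\prod_{i=1}^{\mathbf{s}-1}(-\alpha+r)^{(n_i'-r+1)}\;\Delta(-m_q',\dots,-m_1',-\alpha+1+n_1',\dots,-\alpha+1+n_p')}{\prod_{j=\mathbf{s}'}^{q}(-\alpha+1+m_j')^{(r-1-m_j')}\prod_{i=\mathbf{s}}^{p}(-\alpha+1+n_i')^{(r-1-n_i')}\prod_{j=1}^{q}m_j'!\prod_{i=1}^{p}n_i'!}.$$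
   Context: $L_n^{\beta}$ is the classical Laguerre polynomial; $\mathrm{Wr}$ is the Wronskian; rising factorial $a^{(n)}=a(a+1)\cdots(a+n-1)$, $a^{(0)}=1$; Vandermonde $\Delta(a_1,\dots,a_k)=\prod_{i<j}(a_j-a_i)$. In the paper's notation $P=\Omega^{\alpha}_{\mu,\nu}$ is the generalized Laguerre polynomial for the canonical Maya diagrams $(\emptyset|n_1,\dots,n_p)$, $(\emptyset|m_1,\dots,m_q)$, and $Q=\Omega^{\alpha}_{\mu',\nu'}$ the one for the conjugate canonical diagrams $(n_1',\dots,n_p'|\emptyset)$, $(m_1',\dots,m_q'|\emptyset)$; $Q(0)$ means the value at $0$ of this polynomial. The paper ignores overall factors $(-1)^d$. *)

From HB Require Import structures.
From mathcomp Require Import all_boot all_order all_algebra.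
From mathcomp Require Import all_classical all_reals all_analysis.
Set Implicit Arguments. Unset Strict Implicit. Unset Printing Implicit Defensive.
Import Order.TTheory GRing.Theory Num.Theory.
Local Open Scope ring_scope.

Section Defs.
Variable R : realType.

Definition rfact (a : R) (n : nat) : R := \prod_(i < n) (a + i%:R).

Definition vdm (s : seq R) : R :=
  \prod_(i < size s) \prod_(j < size s | (i < j)%N) (s`_j - s`_i).

(* classical Laguerre polynomial
   L_n^a(x) = sum_{k=0}^n (-1)^k binom(n+a, n-k) x^k / k!,
   with binom(n+a, n-k) = (a+k+1)^(n-k) / (n-k)! *)
Definition laguerre (n : nat) (a : R) : {poly R} :=
  \poly_(k < n.+1)
    ((-1) ^+ k * rfact (a + k.+1%:R) (n - k) / ((n - k)`!%:R * k`!%:R)).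

Definition wronskian (fs : seq (R -> R)) (x : R) : R :=
  \det (\matrix_(i < size fs, j < size fs)
          (derive1n i (nth (fun=> 0) fs j)) x).

Definition wrP (a : R) (ns ms : seq nat) (x : R) : R :=
  expR (- ((size ms)%:R * x)) *
  wronskian ([seq (fun y : R => (laguerre n a).[y]) | n <- ns] ++
             [seq (fun y : R => expR y * (laguerre m a).[- y]) | m <- ms]) x.

(* Q(x) = e^{-px} x^{a r} Wr[x^{-a} L^{-a}_{m'_1}(x),...,x^{-a} L^{-a}_{m'_q}(x),
                          e^x x^{-a} L^{-a}_{n'_1}(-x),..., e^x x^{-a} L^{-a}_{n'_p}(-x)]
   (meaningful for x > 0) *)
Definition wrQ (a : R) (ns' ms' : seq nat) (x : R) : R :=
  expR (- ((size ns')%:R * x)) * powR x (a * (size ns' + size ms')%:R) *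
  wronskian ([seq (fun y : R => powR y (- a) * (laguerre m (- a)).[y]) | m <- ms'] ++
             [seq (fun y : R => expR y * powR y (- a) * (laguerre n (- a)).[- y])
               | n <- ns']) x.

(* the index s (1-based): smallest positive integer such that the entries of
   index >= s are < r-1 and those of index < s are >= r-1 (for a strictly
   decreasing sequence this is one plus the position of the first entry < r-1,
   and size+1 if there is none). *)
Definition sidx (r : nat) (ns : seq nat) : nat := (find (fun n => n < r.-1)%N ns).+1.

Definition formula_num (b : R) (xs ys : seq nat) : R :=
  let p := size xs in let q := size ys in let r := (p + q)%N in
  let s := sidx r xs in let s' := sidx r ys in
  (\prod_(k < r) rfact (b + k.+1%:R) (r - k.+1)) *
  (\prod_(i < p | (i.+1 < s)%N) rfact (b + r%:R) ((nth 0%N xs i).+1 - r)%N) *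
  (\prod_(j < q | (j.+1 < s')%N) rfact (b + r%:R) ((nth 0%N ys j).+1 - r)%N) *
  vdm ([seq - (n%:R) | n <- rev xs] ++ [seq b + 1 + m%:R | m <- ys]).

Definition formula_den (b : R) (xs ys : seq nat) : R :=
  let p := size xs in let q := size ys in let r := (p + q)%N in
  let s := sidx r xs in let s' := sidx r ys in
  (\prod_(i < p | (s <= i.+1)%N) rfact (b + 1 + (nth 0%N xs i)%:R) (r.-1 - nth 0%N xs i)%N) *
  (\prod_(j < q | (s' <= j.+1)%N) rfact (b + 1 + (nth 0%N ys j)%:R) (r.-1 - nth 0%N ys j)%N) *
  (\prod_(i < p) (nth 0%N xs i)`!%:R) * (\prod_(j < q) (nth 0%N ys j)`!%:R).

End Defs.

From HB Require Import structures.
From mathcomp Require Import all_boot all_order all_algebra.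
From mathcomp Require Import all_classical all_reals all_analysis.
From mathcomp Require Import perm ring zify.
Import Order.TTheory GRing.Theory Num.Theory.
Local Open Scope ring_scope.
Set Implicit Arguments. Unset Strict Implicit. Unset Printing Implicit Defensive.

(* At x = 0 the Wronskian matrix of P has explicit entries: the j-th column comes from a
   Laguerre polynomial of degree c_j, and since (e^x L^a_m(-x))' = e^x L^(a+1)_m(-x), the
   i-th derivative at 0 of every function is a ratio of rising factorials in a.
   Multiplying row i by (a+1)^(i) turns column j into ((x_j)^(i))_i times (a+1)^(c_j)/c_j!,
   with nodes x_j = -n_j or a+1+m_j, and det ((x_j)^(i)) is the Vandermonde determinant of
   the nodes, since (X)^(i) is monic of degree i. The row factors are cancelled as an
   identity of polynomials in a, and regrouping the rising factorials around r-1 (which is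
   what the index s records) gives the formula.
   For Q, the weight g = x^-a factors out of the Wronskian as g^r: by the Leibniz rule the
   derivative matrix of (g f_j)_j is a lower triangular matrix with diagonal g times the
   derivative matrix of (f_j)_j. Hence Q is P for the parameter -a with the two families
   swapped. *)

Section Rising.
Variable T : comNzRingType.
Implicit Types (a : T) (s t : seq T).

Definition rising a (n : nat) : T := \prod_(i < n) (a + i%:R).

Lemma rising0 a : rising a 0 = 1.
Proof. by rewrite /rising big_ord0. Qed.

Lemma risingS a n : rising a n.+1 = rising a n * (a + n%:R).
Proof. by rewrite /rising big_ord_recr. Qed.

Lemma risingD a m n : rising a (m + n) = rising a m * rising (a + m%:R) n.
Proof.
elim: n => [|n IHn]; first by rewrite addn0 rising0 mulr1.
by rewrite addnS !risingS IHn natrD addrA mulrA.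
Qed.

Lemma rising_succ_shift a n :
  rising (a + 1) n.+1 = rising a n.+1 + n.+1%:R * rising (a + 1) n.
Proof.
have -> : rising a n.+1 = a * rising (a + 1) n.
  by rewrite -add1n risingD risingS rising0 mul1r addr0.
by rewrite risingS -natr1; ring.
Qed.

Lemma rising_maxn a m n : rising a (maxn m n) = rising a m * rising (a + m%:R) (n - m).
Proof. by rewrite maxnE risingD. Qed.

Lemma rising_oppn (n i : nat) : rising (- n%:R) i = (-1) ^+ i * (n ^_ i)%:R.
Proof.
elim: i => [|i IHi]; first by rewrite rising0 ffactn0 mulr1.
rewrite risingS IHi ffactnSr natrM exprS.
have [le_in|lt_ni] := leqP i n; first by rewrite natrB //; ring.
by rewrite ffact_small // !(mul0r, mulr0).
Qed.

Definition vandermonde s : T :=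
  \prod_(i < size s) \prod_(j < size s | (i < j)%N) (s`_j - s`_i).

Lemma det_rising_vandermonde m s : size s = m ->
  \det (\matrix_(i < m, j < m) rising s`_j i) = vandermonde s.
Proof.
move=> <-{m}.
pose P i : {poly T} := \prod_(k < i) ('X + k%:R%:P).
have monP i : P i \is monic by apply: monic_prod => k _; exact: monicXaddC.
have sizeP i : size (P i) = i.+1.
  elim: i => [|i IHi]; first by rewrite /P big_ord0 size_poly1.
  rewrite /P big_ord_recr /= size_Mmonic ?monicXaddC ?(monic_neq0 (monP i)) //.
  by rewrite -/(P i) IHi size_XaddC addn2.
have hornerP k x : (P k).[x] = rising x k.
  by rewrite horner_prod; apply: eq_bigr => l _; rewrite hornerD hornerX hornerC.
pose U := \matrix_(i, k < size s) (P i)`_k.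
have -> : \matrix_(i, j < size s) rising s`_j i = U *m Vandermonde (size s) (\row_j s`_j).
  apply/matrixP => i j; rewrite !mxE -hornerP (@horner_coef_wide _ (size s)) ?sizeP //.
  by apply: eq_bigr => k _; rewrite !mxE.
rewrite det_mulmx det_Vandermonde det_trig; last first.
  by apply/is_trig_mxP => i j lt_ij; rewrite mxE nth_default // sizeP.
rewrite big1 ?mul1r; last first.
  by move=> i _; rewrite mxE; have := monicP (monP i); rewrite lead_coefE sizeP.
by apply: eq_bigr => i _; apply: eq_bigr => j _; rewrite !mxE.
Qed.

Lemma vandermonde_perm_eq s t : perm_eq s t ->
  exists b : bool, vandermonde t = (-1) ^+ b * vandermonde s.
Proof.
move=> st; have /tuple_permP[σ Eσ] : perm_eq t (in_tuple s) by rewrite perm_sym.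
exists (odd_perm σ).
rewrite -(det_rising_vandermonde (erefl (size s))).
rewrite -(det_rising_vandermonde (esym (perm_size st))).
have -> : \matrix_(i, j < size s) rising t`_j i =
          col_perm σ (\matrix_(i, j < size s) rising s`_j i).
  by apply/matrixP => i j; rewrite !mxE Eσ -tnth_nth tnth_mktuple (tnth_nth 0).
by rewrite col_permE det_mulmx det_perm odd_permV mulrC.
Qed.

End Rising.

Section WronskianAtZero.
Variable T : comNzRingType.
Implicit Types (a : T) (ns ms : seq nat).

(* Entry (i, j) is c_j! times the i-th derivative at 0 of the j-th function in the
   Wronskian of [wrP a ns ms], c_j being its degree (see [wr_poly_mx_at0]). *)
Definition wr0_mx a ns ms : 'M[T]_(size ns + size ms) :=
  \matrix_(i, j)
    if (j < size ns)%N then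
      (-1) ^+ i * rising (a + i.+1%:R) (nth 0%N ns j - i) * (nth 0%N ns j ^_ i)%:R
    else rising (a + i.+1%:R) (nth 0%N ms (j - size ns)).

Definition wr0_nodes a ns ms : seq T :=
  [seq - n%:R | n <- ns] ++ [seq a + 1 + m%:R | m <- ms].

Lemma wr0_mx_col a ns ms (i j : 'I_(size ns + size ms)) :
  rising (a + 1) i * wr0_mx a ns ms i j =
  rising (wr0_nodes a ns ms)`_j i * rising (a + 1) (nth 0%N (ns ++ ms) j).
Proof.
have addS k : a + k.+1%:R = a + 1 + k%:R by rewrite mulrS addrA.
rewrite mxE nth_cat /wr0_nodes nth_cat size_map addS; case: ifP => lt_jp.
  rewrite (nth_map 0%N) // rising_oppn; set n := nth 0%N ns j.
  have [le_in|lt_ni] := leqP i n; last by rewrite ffact_small // !(mulr0, mul0r).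
  have -> : rising (a + 1) n = rising (a + 1) i * rising (a + 1 + i%:R) (n - i).
    by rewrite -risingD subnKC.
  ring.
rewrite (nth_map 0%N); last by move: lt_jp (ltn_ord j); lia.
by rewrite [RHS]mulrC -!risingD addnC.
Qed.

Lemma det_wr0_mx_scaled a ns ms :
  (\prod_(i < size ns + size ms) rising (a + 1) i) * \det (wr0_mx a ns ms) =
  vandermonde (wr0_nodes a ns ms) * \prod_(c <- ns ++ ms) rising (a + 1) c.
Proof.
set r := (size ns + size ms)%N.
have size_nodes : size (wr0_nodes a ns ms) = r by rewrite size_cat !size_map.
have /(congr1 determinant) : diag_mx (\row_(i < r) rising (a + 1) i) *m wr0_mx a ns ms =
    (\matrix_(i, j < r) rising (wr0_nodes a ns ms)`_j i) *m
    diag_mx (\row_(j < r) rising (a + 1) (nth 0%N (ns ++ ms) j)).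
  by apply/matrixP => i j; rewrite mul_diag_mx mul_mx_diag !mxE -wr0_mx_col mxE.
have det_diag_row (d : nat -> T) : \det (diag_mx (\row_(i < r) d i)) = \prod_(i < r) d i.
  by rewrite det_diag; apply: eq_bigr => i _; rewrite mxE.
rewrite !det_mulmx (det_diag_row (rising (a + 1))).
rewrite (det_diag_row (fun j => rising (a + 1) (nth 0%N (ns ++ ms) j))).
rewrite (det_rising_vandermonde size_nodes) => ->.
by rewrite (big_nth 0%N) big_mkord size_cat.
Qed.

Lemma rising_pred_split a r c : (0 < r)%N ->
  rising (a + 1) c * rising (a + 1 + c%:R) (r.-1 - c) =
  rising (a + 1) r.-1 * rising (a + r%:R) (c.+1 - r).
Proof. by case: r => // r _; rewrite -rising_maxn maxnC rising_maxn mulrS addrA subSS. Qed.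

Lemma prod_rising_staircase a r :
  (\prod_(i < r) rising (a + 1) i) * \prod_(k < r) rising (a + k.+1%:R) (r - k.+1) =
  rising (a + 1) r.-1 ^+ r.
Proof.
rewrite -big_split -[r in _ ^+ r]card_ord -prodr_const; apply: eq_bigr => k _ /=.
by rewrite mulrS addrA -risingD; congr rising; have := ltn_ord k; lia.
Qed.

Lemma det_wr0_mx_formula_scaled a ns ms : let r := (size ns + size ms)%N in
  (\prod_(i < r) rising (a + 1) i) *
    (\det (wr0_mx a ns ms) * \prod_(c <- ns ++ ms) rising (a + 1 + c%:R) (r.-1 - c)) =
  (\prod_(i < r) rising (a + 1) i) *
    ((\prod_(k < r) rising (a + k.+1%:R) (r - k.+1)) *
     (\prod_(c <- ns ++ ms) rising (a + r%:R) (c.+1 - r)) * vandermonde (wr0_nodes a ns ms)).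
Proof.
move=> r; rewrite [LHS]mulrA det_wr0_mx_scaled -mulrA -big_split /=.
have -> : \prod_(c <- ns ++ ms) (rising (a + 1) c * rising (a + 1 + c%:R) (r.-1 - c)) =
    rising (a + 1) r.-1 ^+ size (ns ++ ms) * \prod_(c <- ns ++ ms) rising (a + r%:R) (c.+1 - r).
  rewrite -count_predT -iter_mulr_1 -big_const_seq -big_split /=.
  apply: eq_big_seq => c c_in; apply: rising_pred_split.
  by rewrite /r -size_cat; case: (ns ++ ms) c_in.
rewrite size_cat -prod_rising_staircase; ring.
Qed.

End WronskianAtZero.

Section RisingMorph.
Variables (T U : comNzRingType) (f : {rmorphism T -> U}).

Lemma rmorph_rising a n : f (rising a n) = rising (f a) n.
Proof. by rewrite rmorph_prod; apply: eq_bigr => i _; rewrite rmorphD rmorph_nat. Qed.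

Lemma rmorph_prod_rising I (s : seq I) (P : pred I) a (F G : I -> nat) :
  f (\prod_(i <- s | P i) rising (a + (F i)%:R) (G i)) =
  \prod_(i <- s | P i) rising (f a + (F i)%:R) (G i).
Proof. by rewrite rmorph_prod; apply: eq_bigr => i _; rewrite rmorph_rising rmorphD rmorph_nat. Qed.

Lemma rmorph_vandermonde s : f (vandermonde s) = vandermonde (map f s).
Proof.
rewrite /vandermonde size_map rmorph_prod; apply: eq_bigr => i _.
rewrite rmorph_prod; apply: eq_bigr => j _.
by rewrite rmorphB !(nth_map 0) // rmorph0.
Qed.

Lemma map_wr0_mx a ns ms : map_mx f (wr0_mx a ns ms) = wr0_mx (f a) ns ms.
Proof.
apply/matrixP => i j; rewrite !mxE; case: ifP => _.
  by rewrite !rmorphM rmorph_sign rmorph_rising rmorphD !rmorph_nat.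
by rewrite rmorph_rising rmorphD rmorph_nat.
Qed.

Lemma map_wr0_nodes a ns ms : map f (wr0_nodes a ns ms) = wr0_nodes (f a) ns ms.
Proof.
rewrite map_cat -!map_comp; congr (_ ++ _); apply: eq_map => n /=.
  by rewrite rmorphN rmorph_nat.
by rewrite !rmorphD rmorph1 rmorph_nat.
Qed.

End RisingMorph.

Lemma det_wr0_mx_formula (R : idomainType) (a : R) ns ms : let r := (size ns + size ms)%N in
  \det (wr0_mx a ns ms) * \prod_(c <- ns ++ ms) rising (a + 1 + c%:R) (r.-1 - c) =
  (\prod_(k < r) rising (a + k.+1%:R) (r - k.+1)) *
  (\prod_(c <- ns ++ ms) rising (a + r%:R) (c.+1 - r)) * vandermonde (wr0_nodes a ns ms).
Proof.
(* The row factors (a+1)^(i) may vanish in R: cancel them in R[X] at a = 'X, then evaluate. *)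
move=> r; have := det_wr0_mx_formula_scaled ('X : {poly R}) ns ms; rewrite -/r.
have prod_neq0 : \prod_(i < r) rising ('X + 1 : {poly R}) i != 0.
  apply/prodf_neq0 => i _; apply/prodf_neq0 => k _.
  by rewrite -addrA -polyC_natr -polyC1 -polyCD monic_neq0 ?monicXaddC.
move/(mulfI prod_neq0)/(congr1 (horner_eval a)).
rewrite !rmorphM -det_map_mx (map_wr0_mx (horner_eval a)) !(rmorph_prod_rising (horner_eval a)).
rewrite (rmorph_vandermonde (horner_eval a)) (map_wr0_nodes (horner_eval a)) /=.
by rewrite /horner_eval /= !hornerE.
Qed.

Section SidxProducts.
Variables (T : comNzRingType) (F : nat -> T) (r : nat) (xs : seq nat).

Lemma sidx_leq_nth i : (i.+1 < sidx r xs)%N -> (r.-1 <= nth 0%N xs i)%N.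
Proof. by rewrite ltnS => /(before_find 0%N)/negbT; rewrite -leqNgt. Qed.

Lemma nth_lt_sidx i : sorted gtn xs -> (i < size xs)%N -> (sidx r xs <= i.+1)%N ->
  (nth 0%N xs i < r.-1)%N.
Proof.
rewrite ltnS /sidx => xs_sorted lt_is le_fi.
have lt_fs : (find (fun n => n < r.-1)%N xs < size xs)%N := leq_ltn_trans le_fi lt_is.
have := nth_find 0%N (etrans (has_find _ _) lt_fs); apply: leq_ltn_trans.
have geq_trans : transitive geq by move=> m n p le_nm le_pn; apply: leq_trans le_pn le_nm.
have xs_geq : sorted geq xs by apply: sub_sorted xs_sorted => m n /ltnW.
exact: (sorted_leq_nth geq_trans leqnn 0%N xs_geq _ _ lt_fs lt_is le_fi).
Qed.

Lemma prod_ord_nth (s : seq nat) : \prod_(i < size s) F (nth 0%N s i) = \prod_(x <- s) F x.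
Proof. by rewrite (big_nth 0%N) big_mkord. Qed.

Lemma prod_sidx_le : (forall x, (r.-1 <= x)%N -> F x = 1) ->
  \prod_(i < size xs | (sidx r xs <= i.+1)%N) F (nth 0%N xs i) = \prod_(x <- xs) F x.
Proof.
move=> F1; rewrite big_mkcond -prod_ord_nth; apply: eq_bigr => i _ /=.
by case: leqP => // /sidx_leq_nth /F1.
Qed.

Lemma prod_sidx_gt : sorted gtn xs -> (forall x, (x < r.-1)%N -> F x = 1) ->
  \prod_(i < size xs | (i.+1 < sidx r xs)%N) F (nth 0%N xs i) = \prod_(x <- xs) F x.
Proof.
move=> xs_sorted F1; rewrite big_mkcond -prod_ord_nth; apply: eq_bigr => i _ /=.
by case: ltnP => // /(nth_lt_sidx xs_sorted (ltn_ord i)) /F1.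
Qed.

End SidxProducts.

Lemma binomial_convolutionS (T : comNzRingType) (G F : nat -> T) i :
  \sum_(k < i.+1) 'C(i, k)%:R * (G (i - k).+1 * F k + G (i - k)%N * F k.+1) =
  \sum_(k < i.+2) 'C(i.+1, k)%:R * G (i.+1 - k)%N * F k.
Proof.
rewrite [RHS]big_ord_recl /= subn0 bin0.
under [X in _ = _ + X]eq_bigr do rewrite binS natrD subSS.
under eq_bigr do rewrite mulrDr.
rewrite big_split /=.
under [X in _ = _ + X]eq_bigr do rewrite mulrDl mulrDl.
rewrite [X in _ = _ + X]big_split /= addrA; congr (_ + _); last first.
  by apply: eq_bigr => k _; rewrite mulrA.
rewrite big_ord_recl /= subn0 bin0 [X in _ = _ + X]big_ord_recr /= bin_small // mul0r mul0r addr0.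
congr (_ + _); first by rewrite mulrA.
apply: eq_bigr => k _; rewrite /bump /= add1n mulrA.
by have -> : ((i - k.+1).+1 = i - k)%N by have := ltn_ord k; lia.
Qed.

Section Leibniz.
Variables (R : realType) (D : set R).
Hypothesis openD : open (D : set R^o).

Definition smooth_on (f : R -> R) : Prop :=
  forall k y, D y -> derivable (derive1n k f) y 1.

Lemma derive1_eq_on (u v : R -> R) y : D y -> (forall z, D z -> u z = v z) ->
  derive1 u y = derive1 v y.
Proof.
move=> Dy uv; rewrite !derive1E; apply: near_eq_derive.
exact: filterS uv (open_nbhs_nbhs (conj openD Dy)).
Qed.

Lemma derivable_eq_on (u v : R -> R) y : D y -> (forall z, D z -> u z = v z) ->
  derivable u y 1 -> derivable v y 1.
Proof.
move=> Dy uv; apply: near_eq_derivable.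
exact: filterS uv (open_nbhs_nbhs (conj openD Dy)).
Qed.

Lemma derive1n_mul (g f : R -> R) : smooth_on g -> smooth_on f ->
  forall i y, D y -> derive1n i (fun z => g z * f z) y =
    \sum_(k < i.+1) 'C(i, k)%:R * derive1n (i - k) g y * derive1n k f y.
Proof.
move=> g_smooth f_smooth; elim=> [|i IHi] y Dy; first by rewrite big_ord1 /= bin0 mul1r.
have derive_term (c : R) (u w : R -> R) : derivable u y 1 -> derivable w y 1 ->
    'D_1 (fun z => c * u z * w z) y = c * ('D_1 u y * w y + u y * 'D_1 w y).
  move=> du dw; rewrite -[(fun z => _) : R -> R]/((cst c * u) * w)%R.
  have dcu : derivable (cst c * u)%R y 1 by apply: derivableM => //; exact: derivable_cst.
  rewrite deriveM // deriveM ?derivable_cst // derive_cst scaler0 addr0.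
  by rewrite -[(cst c * u)%R y]/(c * u y) /GRing.scale /=; ring.
rewrite derive1nS (derive1_eq_on Dy IHi) derive1E -fct_sumE derive_sum => [|k]; last first.
  apply: derivableM; last exact: f_smooth.
  by apply: derivableM; [exact: derivable_cst | exact: g_smooth].
under eq_bigr => k _ do rewrite (derive_term _ _ _ (g_smooth _ _ Dy) (f_smooth _ _ Dy)).
under eq_bigr => k _ do rewrite -!derive1E -!derive1nS.
exact: (binomial_convolutionS (fun k => derive1n k g y) (fun k => derive1n k f y)).
Qed.

Lemma wronskianE (fs : seq (R -> R)) n x : size fs = n ->
  wronskian fs x = \det (\matrix_(i < n, j < n) derive1n i (nth (fun=> 0) fs j) x).
Proof. by move<-. Qed.

Lemma wronskian_mul_fun (g : R -> R) (fs : seq (R -> R)) x : D x -> smooth_on g ->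
  (forall j, (j < size fs)%N -> smooth_on (nth (fun=> 0) fs j)) ->
  wronskian [seq (fun y => g y * f y) | f <- fs] x = g x ^+ size fs * wronskian fs x.
Proof.
move=> Dx g_smooth fs_smooth; set n := size fs.
rewrite (@wronskianE _ n) ?size_map // (@wronskianE fs n) //.
have -> : \matrix_(i < n, j < n)
      derive1n i (nth (fun=> 0) [seq (fun y => g y * f y) | f <- fs] j) x =
    \matrix_(i < n, k < n) ('C(i, k)%:R * derive1n (i - k) g x) *m
    \matrix_(i < n, j < n) derive1n i (nth (fun=> 0) fs j) x.
  apply/matrixP => i j; rewrite !mxE (nth_map (fun=> 0)) // derive1n_mul //; last exact: fs_smooth.
  under [RHS]eq_bigr do rewrite !mxE.
  rewrite (big_ord_widen n (fun k =>
    'C(i, k)%:R * derive1n (i - k) g x * derive1n k (nth (fun=> 0) fs j) x)) //.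
  rewrite big_mkcond /=; apply: eq_bigr => k _.
  by case: ltnP => // lt_ik; rewrite bin_small // mulr0n !mul0r.
rewrite det_mulmx det_trig; last by apply/is_trig_mxP => i k lt_ik; rewrite mxE bin_small // mul0r.
congr (_ * _); rewrite -[n in _ ^+ n]card_ord -prodr_const; apply: eq_bigr => i _.
by rewrite mxE binn subnn mul1r.
Qed.

End Leibniz.

Section LaguerreWronskian.
Variable R : realType.
Implicit Types (a b : R) (ns ms : seq nat).

Lemma rfactE : @rfact R = @rising R.
Proof. by []. Qed.

Lemma derive1n_horner (p : {poly R}) i : derive1n i (horner p) = horner p^`(i).
Proof.
elim: i => [|i IHi]; first by rewrite derive1n0 derivn0.
by rewrite derive1nS IHi derivnS derivE.
Qed.

Lemma derive1_expR_horner (p : {poly R}) :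
  derive1 (fun y => expR y * p.[y]) = (fun y => expR y * (p + p^`()).[y]).
Proof.
apply/funext => y; rewrite -[(fun y => _) : R -> R]/(expR * horner p)%R derive1E.
rewrite deriveM; [|exact: derivable_expR|exact: derivable_horner].
rewrite -derive1E -derivE.
have -> : 'D_1 expR y = expR y by have := congr1 (fun f => f y) (@derive_expR R).
by rewrite hornerD /GRing.scale /=; ring.
Qed.

Lemma laguerreD1 m b : laguerre m (b + 1) = laguerre m b - (laguerre m b)^`().
Proof.
have nat_neq0 n : (n.+1%:R : R) != 0 by rewrite pnatr_eq0.
have fact_neq0 n : (n`!%:R : R) != 0 by rewrite pnatr_eq0 -lt0n fact_gt0.
apply/polyP => k; rewrite coefB coef_deriv !coef_poly !rfactE.
case: (ltngtP k m) => [lt_km|lt_mk|->]; last 2 first.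
- have -> : (k < m.+1)%N = false by lia.
  have -> : (k.+1 < m.+1)%N = false by lia.
  by rewrite mul0rn subr0.
- by rewrite ltnSn ltnn mul0rn subr0 subnn !rising0.
rewrite ltnS (ltnW lt_km) ltnS lt_km.
have -> : (m - k = (m - k.+1).+1)%N by lia.
set N := (m - k.+1)%N; set c := b + k.+1%:R.
have -> : b + 1 + k.+1%:R = c + 1 by rewrite /c; ring.
have -> : b + k.+2%:R = c + 1 by rewrite /c -natr1; ring.
rewrite rising_succ_shift !factS !natrM exprS -mulr_natr.
by field; rewrite !nat1r !fact_neq0 !nat_neq0.
Qed.

Lemma expR_mul_hornerN (p : {poly R}) :
  (fun y => expR y * p.[- y]) = (fun y => expR y * (p \Po - 'X).[y]).
Proof. by apply/funext => y; rewrite horner_comp hornerN hornerX. Qed.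

Lemma derive1n_expR_laguerreN m b i :
  derive1n i (fun y => expR y * (laguerre m b).[- y]) =
  (fun y => expR y * (laguerre m (b + i%:R)).[- y]).
Proof.
elim: i => [|i IHi]; first by rewrite derive1n0 addr0.
rewrite derive1nS IHi !expR_mul_hornerN derive1_expR_horner deriv_comp derivN derivX mulrN1.
by rewrite -comp_polyB -laguerreD1 -natr1 addrA.
Qed.

Definition wr_funs a ns ms : seq (R -> R) :=
  [seq (fun y => (laguerre n a).[y]) | n <- ns] ++
  [seq (fun y => expR y * (laguerre m a).[- y]) | m <- ms].

Definition wr_poly_mx a ns ms : 'M[{poly R}]_(size ns + size ms) :=
  \matrix_(i, j)
    if (j < size ns)%N then (laguerre (nth 0%N ns j) a)^`(i)
    else laguerre (nth 0%N ms (j - size ns)) (a + i%:R) \Po - 'X.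

Lemma smooth_wr_funs (D : set R) a ns ms j : (j < size (wr_funs a ns ms))%N ->
  smooth_on D (nth (fun=> 0) (wr_funs a ns ms) j).
Proof.
rewrite size_cat !size_map nth_cat size_map => lt_jr k y _.
case: ifP => lt_jp.
  by rewrite (nth_map 0%N) // derive1n_horner; exact: derivable_horner.
rewrite (nth_map 0%N); last by move: lt_jp lt_jr; lia.
rewrite derive1n_expR_laguerreN expR_mul_hornerN.
rewrite -[(fun y => _) : R -> R]/(expR * horner (laguerre _ _ \Po - 'X))%R.
by apply: derivableM; [exact: derivable_expR | exact: derivable_horner].
Qed.

Lemma wronskian_wr_funs a ns ms x :
  wronskian (wr_funs a ns ms) x = (\det (wr_poly_mx a ns ms)).[x] * expR x ^+ size ms.
Proof.
rewrite (@wronskianE _ _ (size ns + size ms)); last by rewrite size_cat !size_map.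
have -> : \matrix_(i, j < size ns + size ms) derive1n i (nth (fun=> 0) (wr_funs a ns ms) j) x =
    map_mx (horner_eval x) (wr_poly_mx a ns ms) *m
    diag_mx (\row_(j < size ns + size ms) if (j < size ns)%N then 1 else expR x).
  apply/matrixP => i j; rewrite mul_mx_diag !mxE /wr_funs nth_cat size_map.
  case: ifP => lt_jp.
    rewrite (nth_map 0%N) // -[(fun y => _) : R -> R]/(horner (laguerre _ a)).
    by rewrite derive1n_horner mulr1.
  rewrite (nth_map 0%N); last by move: lt_jp (ltn_ord j); lia.
  by rewrite derive1n_expR_laguerreN /= horner_evalE horner_comp hornerN hornerX mulrC.
rewrite det_mulmx det_map_mx det_diag /= horner_evalE; congr (_ * _).
rewrite big_split_ord /= big1 ?mul1r; last by move=> i _; rewrite mxE /= ltn_ord.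
rewrite -[X in _ ^+ X]card_ord -prodr_const; apply: eq_bigr => i _.
by rewrite mxE /= ltnNge leq_addr.
Qed.

Lemma wrP_horner a ns ms x : wrP a ns ms x = (\det (wr_poly_mx a ns ms)).[x].
Proof.
rewrite /wrP -/(wr_funs a ns ms) wronskian_wr_funs expRN expRM_natl mulrCA mulVf ?mulr1 //.
by rewrite expf_neq0 // gt_eqF // expR_gt0.
Qed.

Lemma wr_poly_mx_at0 a ns ms :
  map_mx (horner_eval 0) (wr_poly_mx a ns ms) *m
    diag_mx (\row_(j < size ns + size ms) (nth 0%N (ns ++ ms) j)`!%:R) = wr0_mx a ns ms.
Proof.
have fact_neq0 n : (n`!%:R : R) != 0 by rewrite pnatr_eq0 -lt0n fact_gt0.
apply/matrixP => i j; rewrite mul_mx_diag !mxE nth_cat /= horner_evalE.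
case: ifP => lt_jp; set n := nth 0%N _ _.
  rewrite horner_coef0 coef_derivn addn0 ffactnn coef_poly rfactE.
  have [le_in|lt_ni] := leqP i n; last first.
    by rewrite ltnNge lt_ni /= ffact_small // mul0rn !mul0r mulr0.
  rewrite ltnS le_in -(ffact_fact le_in) natrM -mulr_natr.
  by field; rewrite !fact_neq0.
rewrite horner_comp hornerN hornerX oppr0 horner_coef0 coef_poly /= rfactE.
by rewrite subn0 fact0 expr0 mul1r mulr1 divfK // -addrA natr1.
Qed.

Lemma wrP0_mul_fact a ns ms :
  wrP a ns ms 0 * \prod_(c <- ns ++ ms) c`!%:R = \det (wr0_mx a ns ms).
Proof.
rewrite -wr_poly_mx_at0 det_mulmx det_map_mx det_diag /= horner_evalE wrP_horner.
congr (_ * _); rewrite (big_nth 0%N) big_mkord size_cat.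
by apply: eq_bigr => j _; rewrite mxE.
Qed.

End LaguerreWronskian.

Section Formula.
Variable R : realType.
Implicit Types (a : R) (ns ms : seq nat).

Lemma formula_den_prod a ns ms : let r := (size ns + size ms)%N in
  formula_den a ns ms =
  (\prod_(c <- ns ++ ms) rising (a + 1 + c%:R) (r.-1 - c)) * \prod_(c <- ns ++ ms) c`!%:R.
Proof.
move=> r; rewrite /formula_den /= !rfactE -/r.
have prod_tail xs : \prod_(i < size xs | (sidx r xs <= i.+1)%N)
    rising (a + 1 + (nth 0%N xs i)%:R) (r.-1 - nth 0%N xs i) =
    \prod_(c <- xs) rising (a + 1 + c%:R) (r.-1 - c).
  apply: (prod_sidx_le (F := fun c => rising (a + 1 + c%:R) (r.-1 - c))) => c le_rc.
  by rewrite (_ : r.-1 - c = 0)%N ?rising0 //; lia.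
by rewrite !prod_tail !(prod_ord_nth (fun c => c`!%:R)) !big_cat /=; ring.
Qed.

Lemma formula_num_prod a ns ms : sorted gtn ns -> sorted gtn ms ->
  let r := (size ns + size ms)%N in
  formula_num a ns ms =
  (\prod_(k < r) rising (a + k.+1%:R) (r - k.+1)) *
  (\prod_(c <- ns ++ ms) rising (a + r%:R) (c.+1 - r)) *
  vandermonde ([seq - n%:R | n <- rev ns] ++ [seq a + 1 + m%:R | m <- ms]).
Proof.
move=> sorted_ns sorted_ms r; rewrite /formula_num /= !rfactE -/r.
have prod_head xs : sorted gtn xs -> \prod_(i < size xs | (i.+1 < sidx r xs)%N)
    rising (a + r%:R) ((nth 0%N xs i).+1 - r) = \prod_(c <- xs) rising (a + r%:R) (c.+1 - r).
  move=> sorted_xs.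
  apply: (prod_sidx_gt (F := fun c => rising (a + r%:R) (c.+1 - r))) => // c lt_cr.
  by rewrite (_ : c.+1 - r = 0)%N ?rising0 //; lia.
by rewrite !prod_head // big_cat /= !mulrA.
Qed.

Lemma wrP0_formula a ns ms : sorted gtn ns -> sorted gtn ms ->
  exists b : bool, wrP a ns ms 0 * formula_den a ns ms = (-1) ^+ b * formula_num a ns ms.
Proof.
move=> sorted_ns sorted_ms; rewrite formula_den_prod formula_num_prod //.
rewrite mulrCA wrP0_mul_fact mulrC det_wr0_mx_formula.
have /vandermonde_perm_eq[b ->] :
    perm_eq ([seq - n%:R | n <- rev ns] ++ [seq a + 1 + m%:R | m <- ms]) (wr0_nodes a ns ms).
  by rewrite perm_cat2r map_rev perm_rev.
by exists b; ring.
Qed.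

Lemma wrP0_eq_formula a ns ms : sorted gtn ns -> sorted gtn ms -> formula_den a ns ms != 0 ->
  exists eps : R, (eps = 1 \/ eps = -1) /\
    wrP a ns ms 0 = eps * formula_num a ns ms / formula_den a ns ms.
Proof.
move=> sorted_ns sorted_ms den_neq0; have [b wrP0] := wrP0_formula a sorted_ns sorted_ms.
exists ((-1) ^+ b); split; first by case: b {wrP0}; [right | left].
by rewrite -wrP0 mulfK.
Qed.

End Formula.

Section PowerWeight.
Variable R : realType.

Lemma derive1n_powR (b : R) k y : 0 < y ->
  derive1n k (fun z => z `^ b) y = (\prod_(l < k) (b - l%:R)) * y `^ (b - k%:R).
Proof.
elim: k y => [|k IHk] y y_gt0; first by rewrite big_ord0 mul1r subr0.
rewrite derive1nS (derive1_eq_on (@open_gt R 0) y_gt0 IHk) derive1Ml; last first.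
  by apply: derivable_powR; rewrite in_itv /= y_gt0.
rewrite powR_derive1; last by rewrite in_itv /= y_gt0.
by rewrite big_ord_recr /= -natr1 opprD addrA; ring.
Qed.

Lemma smooth_powR (b : R) : smooth_on [set y : R | 0 < y] (fun z => z `^ b).
Proof.
move=> k y y_gt0.
apply: (derivable_eq_on (@open_gt R 0) y_gt0 (fun z z_gt0 => esym (derive1n_powR b k z_gt0))).
rewrite -[(fun z => _) : R -> R]/(cst (\prod_(l < k) (b - l%:R)) * (fun z => z `^ (b - k%:R)))%R.
apply: derivableM; first exact: derivable_cst.
by apply: derivable_powR; rewrite in_itv /= y_gt0.
Qed.

Lemma wrQ_wrP (a : R) ns ms x : 0 < x -> wrQ a ns ms x = wrP (- a) ms ns x.
Proof.
move=> x_gt0; rewrite /wrQ /wrP.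
have -> : [seq (fun y : R => y `^ (- a) * (laguerre m (- a)).[y]) | m <- ms] ++
          [seq (fun y : R => expR y * y `^ (- a) * (laguerre n (- a)).[- y]) | n <- ns] =
          [seq (fun y => y `^ (- a) * f y) | f <- wr_funs (- a) ms ns].
  rewrite /wr_funs map_cat -!map_comp; congr (_ ++ _); apply: eq_map => n /=;
    by apply/funext => y /=; ring.
rewrite (wronskian_mul_fun (@open_gt R 0) x_gt0); last 2 first.
- exact: smooth_powR.
- by move=> j lt_j; apply: smooth_wr_funs.
rewrite -/(wr_funs (- a) ms ns) size_cat !size_map addnC.
rewrite -mulrA [X in _ * X]mulrA -powR_mulrn ?powR_ge0 // -powRrM -powRD; last first.
  by rewrite (gt_eqF x_gt0) implybT.
by rewrite mulNr addrN powRr0 mul1r.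
Qed.

End PowerWeight.

Theorem corollary6p3 (R : realType) (alpha : R) :
  (* (i) *)
  (forall ns ms : seq nat, sorted gtn ns -> sorted gtn ms ->
     formula_den alpha ns ms != 0 ->
     exists eps : R, (eps = 1 \/ eps = -1) /\
       wrP alpha ns ms 0 = eps * formula_num alpha ns ms / formula_den alpha ns ms) /\
  (* (ii) *)
  (forall ns' ms' : seq nat, sorted gtn ns' -> sorted gtn ms' ->
     exists Q : {poly R},
       (forall x : R, 0 < x -> wrQ alpha ns' ms' x = Q.[x]) /\
       (formula_den (- alpha) ms' ns' != 0 ->
        exists eps : R, (eps = 1 \/ eps = -1) /\
          Q.[0] = eps * formula_num (- alpha) ms' ns' / formula_den (- alpha) ms' ns')).
Proof.
split=> [|ns ms sorted_ns sorted_ms]; first exact: wrP0_eq_formula.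
exists (\det (wr_poly_mx (- alpha) ms ns)); split=> [x x_gt0|].
  by rewrite wrQ_wrP // wrP_horner.
by rewrite -wrP_horner; exact: wrP0_eq_formula.
Qed.
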